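(* Use the setting of the context, let $\rho>0$, and for $\star\in\{\rm d,i\}$ let $\Lambda^\star=\max_{\boldsymbol w\in\mathrm{range}(\boldsymbol I_T\otimes\boldsymbol\Pi^\star),\,\boldsymbol w\ne\boldsymbol 0}\boldsymbol w^{\mathsf H}\boldsymbol\Xi\boldsymbol w/\|\boldsymbol w\|^2$ (assuming $\boldsymbol\Pi^\star\neq\boldsymbol 0$). Then: (a) If $\Lambda^{\rm d}\ge\rho$, then $\boldsymbol U^{\mathsf H}\boldsymbol s_0^*\neq\boldsymbol 0$. (b) If $\Lambda^{\rm i}\ge\rho$, then $\boldsymbol U^{\mathsf H}\boldsymbol s_q^*\neq\boldsymbol 0$ for at least one $q\in\{1,\dots,Q\}$. (c) If $\mathrm{rank}(\boldsymbol U)=N_t$, $b_0>0$, $\boldsymbol g_0^{\mathsf H}\boldsymbol\Pi^{\rm d}\boldsymbol g_0>0$, and $$\lambda_{\min}(\boldsymbol U\boldsymbol U^{\mathsf H})\ge\frac{\rho\,\sigma_z^2/N_t}{b_0\,\boldsymbol g_0^{\mathsf H}\boldsymbol\Pi^{\rm d}\boldsymbol g_0},$$ then $\Lambda^{\rm d}\ge\rho$. (d) If $\mathrm{rank}(\boldsymbol U)=N_t$, $Q\ge1$, $\max_{1\le q\le Q}\sigma_q^2\boldsymbol g_q^{\mathsf H}\boldsymbol\Pi^{\rm i}\boldsymbol g_q>0$, and $$\lambda_{\min}(\boldsymbol U\boldsymbol U^{\mathsf H})\ge\frac{\rho\,\sigma_z^2/N_t}{\max_{1\le q\le Q}\sigma_q^2\,\boldsymbol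 g_q^{\mathsf H}\boldsymbol\Pi^{\rm i}\boldsymbol g_q},$$ then $\Lambda^{\rm i}\ge\rho$.
   Context: Let $T,N_t,N_m\ge1$, $Q\ge0$ be integers. Let $\boldsymbol g_0,\dots,\boldsymbol g_Q\in\mathbb{C}^{N_m}$ and $\boldsymbol s_0,\dots,\boldsymbol s_Q\in\mathbb{C}^{N_t}$ be steering vectors all of whose entries have unit magnitude (so $\|\boldsymbol s_q\|^2=N_t$). Let $\boldsymbol U\in\mathbb{C}^{N_t\times T}$ be the transmit code matrix and $\boldsymbol u=\mathrm{vec}(\boldsymbol U)$ (columns stacked). Let $\boldsymbol G_q=\boldsymbol I_T\otimes\boldsymbol g_q\boldsymbol s_q^{\mathsf T}$, let $b_0\ge0$ (direct-path power $|\beta_0|^2$), $\sigma_1^2,\dots,\sigma_Q^2>0$ (indirect-path powers), $\sigma_z^2>0$ (noise variance), and $\boldsymbol\Xi=\frac{b_0}{\sigma_z^2}\boldsymbol G_0\boldsymbol u\boldsymbol u^{\mathsf H}\boldsymbol G_0^{\mathsf H}+\sum_{q=1}^Q\frac{\sigma_q^2}{\sigma_z^2}\boldsymbol G_q\boldsymbol u\boldsymbol u^{\mathsf H}\boldsymbol G_q^{\mathsf H}$. $\boldsymbol\Pi^{\rm d}$ is the orthogonal projector onto the orthogonal complement of $\mathrm{span}\{\boldsymbol g_1,\dots,\boldsymbol g_Q\}$ (or $\boldsymbol I_{N_m}$ if $Q=0$); $\boldsymbol\Pi^{\rm i}$ is the orthogonal projector onto the orthogonal complement of $\mathrm{span}\{\boldsymbol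 g_0\}$ if $b_0>0$ (or $\boldsymbol I_{N_m}$ if $b_0=0$). $\Lambda^{\rm d}$ (resp. $\Lambda^{\rm i}$) is the maximal user SNR achievable with a receive filter zero-forcing the indirect paths (resp. the direct path); the condition $\Lambda^\star\ge\rho$ is the user's SNR/error-rate constraint. $\boldsymbol s^*$ is the entrywise complex conjugate, $\lambda_{\min}$ the smallest eigenvalue. *)

From HB Require Import structures.
From mathcomp Require Import all_boot all_order all_algebra.
From mathcomp Require Import reals complex mxtens.
Set Implicit Arguments. Unset Strict Implicit. Unset Printing Implicit Defensive.
Import Order.TTheory GRing.Theory Num.Theory.
Local Open Scope ring_scope.

Section Defs.
Variable C : numClosedFieldType.

Definition hconj {m n : nat} (A : 'M[C]_(m, n)) : 'M[C]_(n, m) :=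
  (map_mx Num.conj A)^T.

Definition econj {m n : nat} (A : 'M[C]_(m, n)) : 'M[C]_(m, n) :=
  map_mx Num.conj A.

(* vec(U): columns stacked; entry j*m + i is U i j *)
Definition vecmx {m n : nat} (U : 'M[C]_(m, n)) : 'cV[C]_(n * m) :=
  \col_k U (mxtens_unindex k).2 (mxtens_unindex k).1.

Definition sqnorm {n : nat} (w : 'cV[C]_n) : C := (hconj w *m w) 0 0.

Definition qform {n : nat} (A : 'M[C]_n) (x : 'cV[C]_n) : C :=
  (hconj x *m A *m x) 0 0.

Definition in_range {m n : nat} (A : 'M[C]_(m, n)) (w : 'cV[C]_m) : Prop :=
  exists y : 'cV[C]_n, w = A *m y.

Definition is_orth_proj {n : nat} (P : 'M[C]_n) (S : 'cV[C]_n -> Prop) : Prop :=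
  [/\ hconj P = P, P *m P = P & forall x, S x <-> in_range P x].

Definition is_max_rayleigh {n k : nat} (Lam : C) (Xi : 'M[C]_n)
  (B : 'M[C]_(n, k)) : Prop :=
  (exists2 w, in_range B w /\ w != 0 & qform Xi w / sqnorm w = Lam) /\
  (forall w, in_range B w -> w != 0 -> qform Xi w / sqnorm w <= Lam).

Definition is_min_eigenvalue {n : nat} (lam : C) (A : 'M[C]_n) : Prop :=
  eigenvalue A lam /\ (forall a, eigenvalue A a -> lam <= a).

Definition is_max_of {I : finType} (F : I -> C) (m : C) : Prop :=
  (exists i, F i = m) /\ (forall i, F i <= m).

End Defs.

Definition Gu {C : numClosedFieldType} (T Nm Nt : nat) (g : 'cV[C]_Nm)
  (s : 'cV[C]_Nt) (U : 'M[C]_(Nt, T)) : 'cV[C]_(T * Nm) :=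
  (1%:M : 'M[C]_T) *t (g *m s^T) *m vecmx U.

Definition Xi {C : numClosedFieldType} (T Nm Nt Q : nat)
  (g0 : 'cV[C]_Nm) (s0 : 'cV[C]_Nt) (g : 'I_Q -> 'cV[C]_Nm)
  (s : 'I_Q -> 'cV[C]_Nt) (b0 : C) (sig2 : 'I_Q -> C) (sz2 : C)
  (U : 'M[C]_(Nt, T)) : 'M[C]_(T * Nm) :=
  (b0 / sz2) *: (Gu g0 s0 U *m hconj (Gu g0 s0 U)) +
  \sum_(q < Q) (sig2 q / sz2) *: (Gu (g q) (s q) U *m hconj (Gu (g q) (s q) U)).

(* Write a_q := U^T s_q.  The matrix G_q = I_T (x) g_q s_q^T maps vec U to
   a_q (x) g_q (Lemma Gu_tensor), hence
     w^H Xi w = b0/sz2 |<a_0 (x) g_0, w>|^2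
                + sum_q sig2_q/sz2 |<a_q (x) g_q, w>|^2,
   a nonnegative combination of rank-one forms (Lemma qform_Xi), and
   U^H s_q^* is the entrywise conjugate of a_q (Lemma steering_gain_conj).
   (a), (b): if the relevant a_q vanish, every term of the form vanishes on
   range(I_T (x) Pi), because the remaining paths are orthogonal to it; the
   maximal Rayleigh quotient is then 0 < rho (Lemma max_rayleigh_vanishing).
   (c), (d): the test vector (I_T (x) Pi)(a_q (x) g_q) = a_q (x) Pi g_q gives
   Lambda >= sig2/sz2 ||a_q||^2 g_q^H Pi g_q (Lemma max_rayleigh_single_path),
   and ||a_q||^2 = conj(s_q)^H U U^H conj(s_q) >= lambda_min N_t since s_q has
   unit-modulus entries (Lemmas hermitian_min_eig_bound, min_eig_gain). *)
From HB Require Import structures.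
From mathcomp Require Import all_boot all_order all_algebra.
From mathcomp Require Import reals complex mxtens spectral ring.
Set Implicit Arguments. Unset Strict Implicit. Unset Printing Implicit Defensive.
Import Order.TTheory GRing.Theory Num.Theory.
Local Open Scope ring_scope.

Section HermitianAlgebra.
Variable C : numClosedFieldType.

Lemma hconjM m n p (A : 'M[C]_(m, n)) (B : 'M[C]_(n, p)) :
  hconj (A *m B) = hconj B *m hconj A.
Proof. by rewrite /hconj map_mxM trmx_mul. Qed.

Lemma hconjK m n (A : 'M[C]_(m, n)) : hconj (hconj A) = A.
Proof. by apply/matrixP=> i j; rewrite !mxE conjCK. Qed.

Lemma hconjT m n p q (A : 'M[C]_(m, n)) (B : 'M[C]_(p, q)) :
  hconj (A *t B) = hconj A *t hconj B.
Proof. by apply/matrixP=> i j; rewrite !mxE rmorphM. Qed.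

Lemma hconj1 n : hconj (1%:M : 'M[C]_n) = 1%:M.
Proof.
by apply/matrixP=> i j; rewrite !mxE eq_sym; case: (i == j); rewrite ?conjC1 ?conjC0.
Qed.

Lemma hconj_tr m n (A : 'M[C]_(m, n)) : hconj A = map_mx Num.conj A^T.
Proof. by rewrite /hconj map_trmx. Qed.

Lemma econjM m n p (A : 'M[C]_(m, n)) (B : 'M[C]_(n, p)) :
  econj (A *m B) = econj A *m econj B.
Proof. by rewrite /econj map_mxM. Qed.

Lemma econjK m n (A : 'M[C]_(m, n)) : econj (econj A) = A.
Proof. by apply/matrixP=> i j; rewrite !mxE conjCK. Qed.

Lemma hconj_econj m n (A : 'M[C]_(m, n)) : hconj A = econj A^T.
Proof. by rewrite /hconj /econj map_trmx. Qed.

Definition inner n (x y : 'cV[C]_n) : C := (hconj x *m y) 0 0.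

Lemma inner0l n (w : 'cV[C]_n) : inner 0 w = 0.
Proof. by rewrite /inner /hconj map_mx0 trmx0 mul0mx mxE. Qed.

Lemma inner_conj n (x y : 'cV[C]_n) : (inner x y)^* = inner y x.
Proof.
rewrite /inner; have -> : hconj y *m x = hconj (hconj x *m y).
  by rewrite hconjM hconjK.
by rewrite !mxE.
Qed.

Lemma innerT m n (a c : 'cV[C]_m) (b d : 'cV[C]_n) :
  inner (a *t b) (c *t d) = inner a c * inner b d.
Proof.
rewrite /inner (hconjT a b) (tensmx_mul (hconj a) (hconj b) c d).
by rewrite !mxE !ord1.
Qed.

Lemma inner_econj n (v : 'cV[C]_n) : inner (econj v) (econj v) = inner v v.
Proof. by rewrite /inner !mxE; apply: eq_bigr => i _; rewrite !mxE conjCK mulrC. Qed.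

Lemma inner_unit_modulus n (v : 'cV[C]_n) :
  (forall k, `|v k 0| = 1) -> inner v v = n%:R.
Proof.
move=> unit_v; rewrite /inner mxE (eq_bigr (fun=> 1)) ?sumr_const ?card_ord //.
by move=> i _; rewrite !mxE -(normCKC (v i 0)) unit_v expr1n.
Qed.

Lemma qformD n (A B : 'M[C]_n) w : qform (A + B) w = qform A w + qform B w.
Proof. by rewrite /qform mulmxDr mulmxDl mxE. Qed.

Lemma qformZ n (A : 'M[C]_n) c w : qform (c *: A) w = c * qform A w.
Proof. by rewrite /qform -scalemxAr -scalemxAl mxE. Qed.

Lemma qform0 n (w : 'cV[C]_n) : qform 0 w = 0.
Proof. by rewrite /qform mulmx0 mul0mx mxE. Qed.

Lemma qform_sum n I (r : seq I) (P : pred I) (F : I -> 'M[C]_n) w :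
  qform (\sum_(i <- r | P i) F i) w = \sum_(i <- r | P i) qform (F i) w.
Proof. exact: (big_morph (fun A => qform A w) (fun A B => qformD A B w) (qform0 w)). Qed.

Lemma qform_rank1 n (v w : 'cV[C]_n) : qform (v *m hconj v) w = `|inner v w| ^+ 2.
Proof.
rewrite /qform normCKC inner_conj /inner !mulmxA -(mulmxA (hconj w *m v)).
by rewrite [in LHS]mxE big_ord1.
Qed.

Lemma sum_tens m n (F : 'I_(m * n) -> C) :
  \sum_k F k = \sum_(i < m) \sum_(j < n) F (mxtens_index (i, j)).
Proof.
rewrite pair_big /= (reindex (@mxtens_index m n)) /=; last first.
  by exists (@mxtens_unindex m n) => x _; [apply: mxtens_indexK | apply: mxtens_unindexK].
by apply: eq_bigr => -[i j].
Qed.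

Lemma tens_cV m n (a : 'cV[C]_m) (b : 'cV[C]_n) j i :
  (a *t b) (mxtens_index (j, i)) 0 = a j 0 * b i 0.
Proof.
have zero_index : (0 : 'I_1) = mxtens_index (0 : 'I_1, 0 : 'I_1) by apply: val_inj.
by rewrite [in LHS]zero_index tensmxE.
Qed.

Lemma Gu_tensor T Nm Nt (gq : 'cV[C]_Nm) (sq : 'cV[C]_Nt) (U : 'M[C]_(Nt, T)) :
  Gu gq sq U = (U^T *m sq) *t gq.
Proof.
apply/matrixP => k l; rewrite !ord1; case: (mxtens_indexP k) => j i.
rewrite tens_cV !mxE sum_tens (bigD1 j) //= [X in _ + X]big1 ?addr0; last first.
  move=> j' nj; apply: big1 => i' _.
  by rewrite !mxE !mxtens_indexK /= eq_sym (negbTE nj) mulr0n !mul0r.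
rewrite mulr_suml; apply: eq_bigr => i' _.
rewrite !mxE !mxtens_indexK /= eqxx mulr1n mul1r big_ord1 !mxE; ring.
Qed.

Lemma steering_gain_conj Nt T (U : 'M[C]_(Nt, T)) (sq : 'cV[C]_Nt) :
  hconj U *m econj sq = econj (U^T *m sq).
Proof. by rewrite hconj_econj econjM. Qed.

Lemma Gu_eq0 T Nm Nt (gq : 'cV[C]_Nm) (sq : 'cV[C]_Nt) (U : 'M[C]_(Nt, T)) :
  hconj U *m econj sq = 0 -> Gu gq sq U = 0.
Proof.
rewrite steering_gain_conj Gu_tensor => /(congr1 (@econj _ _ _)); rewrite econjK => ->.
by rewrite (_ : econj 0 = 0) ?tens0mx //; apply/matrixP => i j; rewrite !mxE conjC0.
Qed.

Lemma Gu_orth T Nm Nt (gq : 'cV[C]_Nm) (sq : 'cV[C]_Nt) (U : 'M[C]_(Nt, T))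
    (P : 'M[C]_Nm) (S : 'cV[C]_Nm -> Prop) w :
  is_orth_proj P S -> (forall x, S x -> hconj gq *m x = 0) ->
  in_range ((1%:M : 'M_T) *t P) w -> inner (Gu gq sq U) w = 0.
Proof.
move=> [_ _ rangeP] gq_orth [y ->].
have gqP : hconj gq *m P = 0.
  apply/matrixP => i j.
  have P_col : S (P *m delta_mx j 0) by apply/rangeP; exists (delta_mx j 0).
  have /matrixP/(_ i 0) := gq_orth _ P_col.
  by rewrite mulmxA -colE !mxE.
rewrite Gu_tensor /inner (hconjT (U^T *m sq) gq) mulmxA.
rewrite (tensmx_mul (hconj (U^T *m sq)) (hconj gq) 1%:M P).
by rewrite gqP tensmx0 mul0mx mxE.
Qed.

Lemma spectral_diag_eigenvalue n (A : 'M[C]_n) i :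
  A \is normalmx -> eigenvalue A (spectral_diag A 0 i).
Proof.
move=> /orthomx_spectralP A_eq; set P := spectralmx A in A_eq.
have P_unit : P \is unitarymx by exact: spectral_unitarymx.
have PPt : P *m hconj P = 1%:M by rewrite hconj_tr; apply/unitarymxP.
rewrite invmx_unitary // -hconj_tr in A_eq.
apply/eigenvalueP; exists (row i P).
  by rewrite [in LHS]A_eq !mulmxA -2!row_mul PPt mul1mx row_diag_mx -scalemxAl -rowE.
apply/eqP => row0; have := congr1 (mulmx^~ (hconj P)) row0.
rewrite /= -row_mul PPt mul0mx => /matrixP/(_ 0 i); rewrite !mxE eqxx /= => /eqP.
by rewrite oner_eq0.
Qed.

Lemma hermitian_min_eig_bound n (A : 'M[C]_n) lam (x : 'cV[C]_n) :
  hconj A = A -> is_min_eigenvalue lam A -> lam * sqnorm x <= qform A x.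
Proof.
move=> A_herm [_ lam_min].
have A_normal : A \is normalmx by apply/normalmxP; rewrite -!hconj_tr A_herm.
have /orthomx_spectralP A_eq := A_normal.
set P := spectralmx A in A_eq; set d := spectral_diag A in A_eq.
have P_unit : P \is unitarymx by exact: spectral_unitarymx.
have PtP : hconj P *m P = 1%:M by apply: mulmx1C; rewrite hconj_tr; apply/unitarymxP.
rewrite invmx_unitary // -hconj_tr in A_eq.
set y := P *m x.
have -> : sqnorm x = inner y y.
  by rewrite /sqnorm /inner /y hconjM -mulmxA (mulmxA (hconj P)) PtP mul1mx.
have -> : qform A x = (hconj y *m diag_mx d *m y) 0 0.
  by rewrite /qform /y hconjM A_eq !mulmxA.
rewrite /inner !mxE mulr_sumr; apply: ler_sum => i _.
rewrite mul_mx_diag !mxE mulrAC [in X in _ <= X]mulrC.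
apply: ler_wpM2r (lam_min _ (spectral_diag_eigenvalue i A_normal)).
by rewrite -normCKC exprn_ge0.
Qed.

Lemma min_eig_gain n T (U : 'M[C]_(n, T)) (sq : 'cV[C]_n) lam :
  (forall k, `|sq k 0| = 1) -> is_min_eigenvalue lam (U *m hconj U) ->
  lam * n%:R <= inner (U^T *m sq) (U^T *m sq).
Proof.
move=> unit_s lam_min.
have := hermitian_min_eig_bound (econj sq) _ lam_min.
rewrite /sqnorm -/(inner _ _) inner_econj inner_unit_modulus // => bound.
have -> : inner (U^T *m sq) (U^T *m sq) = qform (U *m hconj U) (econj sq).
  by rewrite -inner_econj /qform /inner econjM -hconj_econj hconjM hconjK !mulmxA.
by apply: bound; rewrite hconjM hconjK.
Qed.

Lemma max_rayleigh_vanishing n k (L : C) (X : 'M[C]_n) (B : 'M[C]_(n, k)) :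
  is_max_rayleigh L X B -> (forall w, in_range B w -> qform X w = 0) -> L = 0.
Proof. by move=> [[w [w_range _] <-] _] X0; rewrite X0 // mul0r. Qed.

Lemma max_rayleigh_single_path T Nm (a : 'cV[C]_T) (gq : 'cV[C]_Nm)
    (P : 'M[C]_Nm) (X : 'M[C]_(T * Nm)) (L coef : C) :
  hconj P = P -> P *m P = P -> is_max_rayleigh L X ((1%:M : 'M_T) *t P) ->
  0 < inner a a -> 0 < qform P gq ->
  coef * `|inner (a *t gq) (((1%:M : 'M_T) *t P) *m (a *t gq))| ^+ 2
    <= qform X (((1%:M : 'M_T) *t P) *m (a *t gq)) ->
  coef * inner a a * qform P gq <= L.
Proof.
move=> P_herm P_idem [_ L_max] a_gt0 gPg_gt0 X_ge.
set w := ((1%:M : 'M_T) *t P) *m (a *t gq) in X_ge *.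
have w_tens : w = a *t (P *m gq) by rewrite /w (tensmx_mul 1%:M P a gq) mul1mx.
have w_gain : inner (a *t gq) w = inner a a * qform P gq.
  by rewrite w_tens innerT /qform /inner mulmxA.
have w_norm : sqnorm w = inner a a * qform P gq.
  rewrite -[sqnorm w]/(inner w w) w_tens innerT; congr (_ * _).
  by rewrite /inner /qform hconjM P_herm !mulmxA -(mulmxA _ P P) P_idem.
have norm_gt0 : 0 < inner a a * qform P gq by apply: mulr_gt0.
have w_neq0 : w != 0.
  by apply/eqP => w0; move: norm_gt0; rewrite -w_norm w0 /sqnorm mulmx0 mxE ltxx.
apply: le_trans (L_max w (ex_intro _ (a *t gq) erefl) w_neq0).
rewrite w_norm ler_pdivlMr //; apply: le_trans X_ge.
by rewrite w_gain ger0_norm ?(ltW norm_gt0) // expr2 !mulrA.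
Qed.

End HermitianAlgebra.

Lemma snr_threshold (F : numFieldType) (rho sz2 N K lam gain : F) :
  0 < sz2 -> 0 < N -> 0 < K -> (rho * sz2 / N) / K <= lam -> lam * N <= gain ->
  rho <= K / sz2 * gain.
Proof.
move=> sz2_gt0 N_gt0 K_gt0; rewrite !ler_pdivrMr // => rho_le gain_ge.
rewrite mulrAC ler_pdivlMr //; apply: (le_trans rho_le).
by rewrite mulrAC [K * gain]mulrC; apply: ler_wpM2r; first exact: ltW.
Qed.

Section SignalModel.
Variables (C : numClosedFieldType) (T Nt Nm Q : nat).
Variables (g0 : 'cV[C]_Nm) (s0 : 'cV[C]_Nt).
Variables (g : 'I_Q -> 'cV[C]_Nm) (s : 'I_Q -> 'cV[C]_Nt).
Variables (U : 'M[C]_(Nt, T)) (b0 : C) (sig2 : 'I_Q -> C) (sz2 : C).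
Hypotheses (b0_ge0 : 0 <= b0) (sig2_gt0 : forall q, 0 < sig2 q) (sz2_gt0 : 0 < sz2).

Local Notation Xi0 := (Xi g0 s0 g s b0 sig2 sz2 U).

Lemma qform_Xi w :
  qform Xi0 w = b0 / sz2 * `|inner (Gu g0 s0 U) w| ^+ 2 +
    \sum_(q < Q) sig2 q / sz2 * `|inner (Gu (g q) (s q) U) w| ^+ 2.
Proof.
rewrite /Xi qformD qformZ qform_rank1 qform_sum; congr (_ + _).
by apply: eq_bigr => q _; rewrite qformZ qform_rank1.
Qed.

Lemma qform_Xi_eq0 w :
  b0 * inner (Gu g0 s0 U) w = 0 -> (forall q, inner (Gu (g q) (s q) U) w = 0) ->
  qform Xi0 w = 0.
Proof.
move=> direct0 indirect0; rewrite qform_Xi big1 => [|q _]; last first.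
  by rewrite indirect0 normr0 expr0n /= mulr0.
move/eqP: direct0; rewrite addr0 mulf_eq0 => /orP[/eqP-> | /eqP->].
  by rewrite !mul0r.
by rewrite normr0 expr0n /= mulr0.
Qed.

Let path_term_ge0 (p : C) n (v w : 'cV[C]_n) :
  0 <= p -> 0 <= p / sz2 * `|inner v w| ^+ 2.
Proof. by move=> p_ge0; rewrite mulr_ge0 ?exprn_ge0 // divr_ge0 // ltW. Qed.

Lemma qform_Xi_ge_direct w : b0 / sz2 * `|inner (Gu g0 s0 U) w| ^+ 2 <= qform Xi0 w.
Proof.
rewrite qform_Xi lerDl; apply: sumr_ge0 => q _.
exact/path_term_ge0/ltW.
Qed.

Lemma qform_Xi_ge_indirect q w :
  sig2 q / sz2 * `|inner (Gu (g q) (s q) U) w| ^+ 2 <= qform Xi0 w.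
Proof.
rewrite qform_Xi (bigD1 q) //= addrCA lerDl; apply: addr_ge0; first exact: path_term_ge0.
by apply: sumr_ge0 => q' _; exact/path_term_ge0/ltW.
Qed.

Lemma path_snr_bound (X : 'M[C]_(T * Nm)) (P : 'M[C]_Nm) (gq : 'cV[C]_Nm)
    (sq : 'cV[C]_Nt) (p L lam rho : C) :
  (0 < Nt)%N -> 0 < rho -> 0 < p -> hconj P = P -> P *m P = P ->
  0 < qform P gq -> (forall k, `|sq k 0| = 1) ->
  (forall w, p / sz2 * `|inner (Gu gq sq U) w| ^+ 2 <= qform X w) ->
  is_max_rayleigh L X ((1%:M : 'M_T) *t P) ->
  is_min_eigenvalue lam (U *m hconj U) ->
  (rho * sz2 / Nt%:R) / (p * qform P gq) <= lam -> rho <= L.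
Proof.
move=> Nt_gt0 rho_gt0 p_gt0 P_herm P_idem gPg_gt0 unit_s X_ge L_max lam_min thr.
have Nt_pos : 0 < Nt%:R :> C by rewrite ltr0n.
set gain := inner (U^T *m sq) (U^T *m sq).
have gain_ge : lam * Nt%:R <= gain := min_eig_gain unit_s lam_min.
have lam_gt0 : 0 < lam.
  by apply: lt_le_trans thr; rewrite !divr_gt0 ?mulr_gt0.
have gain_gt0 := lt_le_trans (mulr_gt0 lam_gt0 Nt_pos) gain_ge.
apply: le_trans (snr_threshold sz2_gt0 Nt_pos (mulr_gt0 p_gt0 gPg_gt0) thr gain_ge) _.
have := max_rayleigh_single_path P_herm P_idem L_max gain_gt0 gPg_gt0.
rewrite -Gu_tensor => /(_ _ (X_ge _)).
by rewrite [p * _ / sz2]mulrAC [p / sz2 * _ * gain]mulrAC; apply: le_trans.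
Qed.

End SignalModel.

(* Paths are indexed 0 (direct: g0, s0, b0) and q = 1..Q, the latter
   represented by q : 'I_Q (paper index q+1). *)
Theorem proposition5 (R : realType) (T Nt Nm Q : nat)
  (g0 : 'cV[R[i]]_Nm) (s0 : 'cV[R[i]]_Nt)
  (g : 'I_Q -> 'cV[R[i]]_Nm) (s : 'I_Q -> 'cV[R[i]]_Nt)
  (U : 'M[R[i]]_(Nt, T)) (b0 : R[i]) (sig2 : 'I_Q -> R[i]) (sz2 : R[i])
  (rho : R[i]) (Pi_d Pi_i : 'M[R[i]]_Nm) :
  (0 < T)%N -> (0 < Nt)%N -> (0 < Nm)%N ->
  (forall k, `|g0 k 0| = 1) -> (forall k, `|s0 k 0| = 1) ->
  (forall q k, `|g q k 0| = 1) -> (forall q k, `|s q k 0| = 1) ->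
  0 <= b0 -> (forall q, 0 < sig2 q) -> 0 < sz2 -> 0 < rho ->
  is_orth_proj Pi_d (fun x => forall q, hconj (g q) *m x = 0) ->
  (0 < b0 -> is_orth_proj Pi_i (fun x => hconj g0 *m x = 0)) ->
  (b0 = 0 -> Pi_i = 1%:M) ->
  let Xi0 := Xi g0 s0 g s b0 sig2 sz2 U in
  (* (a) *)
  (forall Ld, Pi_d != 0 ->
     is_max_rayleigh Ld Xi0 ((1%:M : 'M_T) *t Pi_d) -> rho <= Ld ->
     hconj U *m econj s0 != 0) /\
  (* (b) *)
  (forall Li, Pi_i != 0 ->
     is_max_rayleigh Li Xi0 ((1%:M : 'M_T) *t Pi_i) -> rho <= Li ->
     exists q : 'I_Q, hconj U *m econj (s q) != 0) /\
  (* (c) *)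
  (forall Ld lam, Pi_d != 0 ->
     is_max_rayleigh Ld Xi0 ((1%:M : 'M_T) *t Pi_d) ->
     \rank U = Nt -> 0 < b0 -> 0 < qform Pi_d g0 ->
     is_min_eigenvalue lam (U *m hconj U) ->
     (rho * sz2 / Nt%:R) / (b0 * qform Pi_d g0) <= lam ->
     rho <= Ld) /\
  (* (d) *)
  (forall Li lam M, Pi_i != 0 ->
     is_max_rayleigh Li Xi0 ((1%:M : 'M_T) *t Pi_i) ->
     \rank U = Nt -> (0 < Q)%N ->
     is_max_of (fun q => sig2 q * qform Pi_i (g q)) M -> 0 < M ->
     is_min_eigenvalue lam (U *m hconj U) ->
     (rho * sz2 / Nt%:R) / M <= lam ->
     rho <= Li).
Proof.
move=> _ Nt_gt0 _ _ unit_s0 _ unit_s b0_ge0 sig2_gt0 sz2_gt0 rho_gt0 Pd_proj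
  Pi_proj Pi_id Xi0.
have [Pd_herm Pd_idem _] := Pd_proj.
have b0_cases : b0 = 0 \/ 0 < b0 by move: b0_ge0; rewrite le0r => /orP[/eqP|]; auto.
have [Pi_herm Pi_idem] : hconj Pi_i = Pi_i /\ Pi_i *m Pi_i = Pi_i.
  by case: b0_cases => [/Pi_id ->|/Pi_proj[]]; rewrite ?hconj1 ?mulmx1.
have unreachable L (B : 'M_(T * Nm)) : is_max_rayleigh L Xi0 B -> rho <= L ->
    (forall w, in_range B w -> qform Xi0 w = 0) -> False.
  move=> L_max rho_le /(max_rayleigh_vanishing L_max) L0.
  by move: (lt_le_trans rho_gt0 rho_le); rewrite L0 ltxx.
split; [|split; [|split]].
- move=> Ld _ Ld_max rho_le; apply/eqP => a0.
  apply: (unreachable _ _ Ld_max rho_le) => w w_range.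
  apply: qform_Xi_eq0 => [|q]; first by rewrite Gu_eq0 // inner0l mulr0.
  by apply: Gu_orth Pd_proj _ w_range => x; apply.
- move=> Li _ Li_max rho_le.
  have [q a_q|no_q] := pickP (fun q => hconj U *m econj (s q) != 0); first by exists q.
  exfalso; apply: (unreachable _ _ Li_max rho_le) => w w_range.
  apply: qform_Xi_eq0 => [|q]; last by rewrite Gu_eq0 ?inner0l //; apply/eqP/negbFE/no_q.
  case: b0_cases => [->|/Pi_proj b0_proj]; first by rewrite mul0r.
  by rewrite (Gu_orth _ _ b0_proj (fun x gx => gx) w_range) mulr0.
- move=> Ld lam _ Ld_max _ b0_gt0 gPg_gt0 lam_min thr.
  apply: (path_snr_bound sz2_gt0 Nt_gt0 rho_gt0 b0_gt0 Pd_herm Pd_idem gPg_gt0 unit_s0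
    _ Ld_max lam_min thr).
  exact: (qform_Xi_ge_direct g0 s0 g s U b0 sig2_gt0 sz2_gt0).
- move=> Li lam M _ Li_max _ _ [[q <-] _] M_gt0 lam_min thr.
  have gPg_gt0 : 0 < qform Pi_i (g q) by move: M_gt0; rewrite pmulr_rgt0.
  apply: (path_snr_bound sz2_gt0 Nt_gt0 rho_gt0 (sig2_gt0 q) Pi_herm Pi_idem gPg_gt0
    (unit_s q) _ Li_max lam_min thr).
  exact: (qform_Xi_ge_indirect g0 s0 g s U b0_ge0 sig2_gt0 sz2_gt0 q).
Qed.
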